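(* For every integer $s\ge 3$ there exists a constant $C>0$ such that every graph $G$ with no stable set of size $s$ admits a clique cover of size at most $C|G|^{2-\frac{1}{s-1}}$.
   Context: All graphs are finite and simple; $|G|$ is the number of vertices of $G$. A clique $X$ of $G$ covers an edge $uv$ if $u,v\in X$; a clique cover of $G$ is a collection of cliques of $G$ that together cover all edges of $G$, and its size is the number of cliques in it. *)

From mathcomp Require Import all_boot.
From Stdlib Require Import Reals.
Set Implicit Arguments. Unset Strict Implicit. Unset Printing Implicit Defensive.

Definition simple_graph (T : finType) (e : rel T) : Prop :=
  symmetric e /\ irreflexive e.

Definition is_clique (T : finType) (e : rel T) (X : {set T}) : Prop :=
  forall u v, u \in X -> v \in X -> u != v -> e u v.

Definition is_stable (T : finType) (e : rel T) (S : {set T}) : Prop :=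
  forall u v, u \in S -> v \in S -> ~~ e u v.

Definition is_clique_cover (T : finType) (e : rel T) (P : {set {set T}}) : Prop :=
  (forall X, X \in P -> is_clique e X) /\
  (forall u v, e u v -> exists2 X, X \in P & (u \in X) && (v \in X)).


(* Let r = s - 1, so that there is no stable set of size r + 1.  A vertex set
   of size at least t^r then contains a t-clique: either some vertex has t^(r-1)
   non-neighbours, among which we recurse on r, or every vertex misses fewer
   than t^(r-1) vertices and a t-clique is grown greedily.  Peeling off
   k-cliques with k = 2^i from a set of at most (2k)^r vertices costs at most
   2^r k^(r-1) cliques and leaves fewer than k^r vertices, which are treated
   at scale 2^(i-1); the geometric sum covers the vertices of an n-vertex
   graph by O(n^(1 - 1/r)) cliques.  Finally, the cliques {v} ∪ (N(v) ∩ X),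
   for v a vertex and X one of these cliques, cover every edge, which gives
   n * O(n^(1 - 1/r)) = O(n^(2 - 1/r)) cliques. *)
From mathcomp Require Import all_boot zify.
From Stdlib Require Import Reals Lra.
(* [Reals] redeclares [_ ^ _] on nat as [Nat.pow]; restore [expn]. *)
Import ssrnat.

Set Implicit Arguments.
Unset Strict Implicit.
Unset Printing Implicit Defensive.

Lemma pow2_bracket m n : 0 < m -> 0 < n ->
  exists i, n <= (2 ^ i) ^ m <= 2 ^ m * n.
Proof.
move=> m_gt0 n_gt0.
have ex_i : exists i, n <= (2 ^ i) ^ m.
  exists n; apply: leq_trans (ltnW (ltn_expl n (isT : 1 < 2))) _.
  by rewrite -expnM leq_pexp2l ?leq_pmulr.
case: (ex_minnP ex_i) => -[|j] n_le min_i.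
  by exists 0; rewrite n_le expn0 exp1n muln_gt0 expn_gt0.
have lt_n : (2 ^ j) ^ m < n by rewrite ltnNge; apply/negP => /min_i; rewrite ltnn.
by exists j.+1; rewrite n_le expnS expnMn leq_mul2l ltnW ?orbT.
Qed.

Lemma INR_muln m k : INR (m * k) = (INR m * INR k)%R.
Proof. by rewrite mulnE mult_INR. Qed.

Lemma INR_expn m k : INR (m ^ k) = (INR m ^ k)%R.
Proof. by elim: k => [|k IHk] //; rewrite expnS INR_muln IHk. Qed.

Lemma Rpower_pow_inv (x : R) (k : nat) :
  (0 < x)%R -> 0 < k -> (Rpower (x ^ k) (/ INR k))%R = x.
Proof.
move=> x_gt0 k_gt0.
have k_neq0 : INR k <> 0%R by apply: not_0_INR; lia.
by rewrite -Rpower_pow // Rpower_mult Rinv_r // Rpower_1.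
Qed.

Lemma INR_le_Rpower_of_expn_le (p c n m : nat) :
  p ^ m.+1 <= c ^ m.+1 * n ^ m.*2.+1 ->
  (INR p <= INR c * Rpower (INR n) (2 - / INR m.+1))%R.
Proof.
move=> h.
have Rpower_gt0 y : (0 < Rpower (INR n) y)%R by apply: exp_pos.
have [->|p_gt0] := posnP p.
  by apply: Rmult_le_pos; [apply: pos_INR | apply: Rlt_le].
have /andP[c_gt0 n_gt0] : (0 < c) && (0 < n).
  have pm_gt0 : 0 < p ^ m.+1 by rewrite expn_gt0 p_gt0.
  by move: (leq_trans pm_gt0 h); rewrite muln_gt0 !expn_gt0 /= !orbF.
have [p_R c_R n_R] : [/\ (0 < INR p)%R, (0 < INR c)%R & (0 < INR n)%R].
  by split; apply/lt_0_INR/ltP.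
set y := (INR c * _)%R.
have y_gt0 : (0 < y)%R by apply: Rmult_lt_0_compat.
have y_pow : (y ^ m.+1 = INR (c ^ m.+1 * n ^ m.*2.+1))%R.
  rewrite INR_muln !INR_expn /y Rpow_mult_distr -(Rpower_pow m.+1 _ (Rpower_gt0 _)).
  rewrite -(Rpower_pow m.*2.+1 _ n_R) Rpower_mult; congr (_ * Rpower _ _)%R.
  by rewrite !S_INR -!mul2n !mult_INR /=; have := pos_INR m => ?; field; lra.
rewrite -(Rpower_pow_inv p_R (ltn0Sn m)) -(Rpower_pow_inv y_gt0 (ltn0Sn m)).
apply: Rle_Rpower_l; first by apply: Rlt_le; apply: Rinv_0_lt_compat; apply: lt_0_INR; lia.
split; first exact: pow_lt.
by rewrite y_pow -INR_expn; apply/le_INR/leP.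
Qed.

Section CliqueCovers.

Variables (T : finType) (e : rel T).
Hypothesis e_simple : simple_graph e.

Let e_sym : symmetric e := proj1 e_simple.
Let e_irr : irreflexive e := proj2 e_simple.

Definition nonnbrs (A : {set T}) (v : T) : {set T} :=
  [set u in A | (u != v) && ~~ e v u].

Definition is_clique_vertex_cover (A : {set T}) (F : {set {set T}}) : Prop :=
  (forall X, X \in F -> is_clique e X) /\ A \subset cover F.

Lemma is_clique_setU1 v K :
  is_clique e K -> {in K, forall u, e v u} -> is_clique e (v |: K).
Proof.
move=> K_clique vK x y; rewrite !inE.
case/predU1P=> [->|xK]; case/predU1P=> [->|yK]; rewrite ?eqxx // => xy.
- exact: vK.
- by rewrite e_sym vK.
- exact: K_clique.
Qed.

Lemma is_stable_setU1 v S :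
  is_stable e S -> {in S, forall u, ~~ e v u} -> is_stable e (v |: S).
Proof.
move=> S_stable vS x y; rewrite !inE.
case/predU1P=> [->|xS]; case/predU1P=> [->|yS].
- by rewrite e_irr.
- exact: vS.
- by rewrite e_sym vS.
- exact: S_stable.
Qed.

Lemma clique_of_few_nonnbrs (A : {set T}) m : 0 < m ->
  {in A, forall v, #|nonnbrs A v| < m} ->
  forall j (B : {set T}), B \subset A -> j * m <= #|B| ->
  exists K : {set T}, [/\ K \subset B, is_clique e K & #|K| = j].
Proof.
move=> m_gt0 few_nonnbrs; elim=> [|j IHj] B sBA card_B.
  by exists set0; rewrite sub0set cards0; split=> // u v; rewrite inE.
have [v vB] : exists v, v \in B.
  by apply/set0Pn; rewrite -card_gt0; move: card_B; rewrite mulSn; lia.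
set B' := [set u in B | e v u].
have sB'B : B' \subset B by apply/subsetP=> u; rewrite inE => /andP[].
have sB : B \subset v |: (B' :|: nonnbrs A v).
  apply/subsetP=> u uB; rewrite !inE uB (subsetP sBA u uB) /=.
  by case: eqVneq => //= _; case: (e v u).
have card_B' : j * m <= #|B'|.
  have := subset_leq_card sB; rewrite cardsU1.
  have := leq_b1 (v \notin B' :|: nonnbrs A v).
  have := leq_of_leqif (leq_card_setU B' (nonnbrs A v)).
  have := few_nonnbrs v (subsetP sBA v vB).
  move: card_B; rewrite mulSn; lia.
have [K [sKB' K_clique <-]] := IHj B' (subset_trans sB'B sBA) card_B'.
have vK : v \notin K by apply/negP => /(subsetP sKB'); rewrite inE e_irr andbF.
exists (v |: K); split; last by rewrite cardsU1 vK.
- by rewrite subUset sub1set vB (subset_trans sKB' sB'B).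
- apply: is_clique_setU1 => // u /(subsetP sKB').
  by rewrite inE => /andP[].
Qed.

Lemma nonnbrs_sub A v : nonnbrs A v \subset A.
Proof. by apply/subsetP=> u; rewrite inE => /andP[]. Qed.

Lemma ramsey_clique r t (A : {set T}) : 0 < t ->
  (forall S : {set T}, S \subset A -> #|S| = r.+1 -> ~ is_stable e S) ->
  t ^ r <= #|A| ->
  exists K : {set T}, [/\ K \subset A, is_clique e K & #|K| = t].
Proof.
move=> t_gt0; elim: r A => [|r IHr] A no_stable card_A.
  have [x xA] : exists x, x \in A by apply/set0Pn; rewrite -card_gt0.
  case: (no_stable [set x]); rewrite ?sub1set ?cards1 // => u w.
  by rewrite !inE => /eqP-> /eqP->; rewrite e_irr.
case: (boolP [exists v in A, t ^ r <= #|nonnbrs A v|]).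
  case/exists_inP=> v vA card_v.
  have [K [sK K_clique card_K]] : exists K : {set T},
      [/\ K \subset nonnbrs A v, is_clique e K & #|K| = t].
    apply: IHr card_v => S sS card_S S_stable.
    have vS : v \notin S by apply/negP => /(subsetP sS); rewrite inE eqxx andbF.
    apply: (no_stable (v |: S)).
    - by rewrite subUset sub1set vA (subset_trans sS (nonnbrs_sub A v)).
    - by rewrite cardsU1 vS card_S.
    - apply: is_stable_setU1 => // u /(subsetP sS).
      by rewrite inE => /and3P[].
  by exists K; split=> //; apply: subset_trans sK (nonnbrs_sub A v).
move/exists_inPn=> few; apply: (clique_of_few_nonnbrs (m := t ^ r)) => //.
- by rewrite expn_gt0 t_gt0.
- by move=> v /few; rewrite ltnNge.
- by rewrite -expnS.
Qed.

Lemma is_clique_vertex_coverU A1 A2 F1 F2 :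
  is_clique_vertex_cover A1 F1 -> is_clique_vertex_cover A2 F2 ->
  is_clique_vertex_cover (A1 :|: A2) (F1 :|: F2).
Proof.
move=> [F1_cliques A1_sub] [F2_cliques A2_sub]; split.
  by move=> X; rewrite inE => /orP[/F1_cliques|/F2_cliques].
by rewrite /cover bigcup_setU setUSS.
Qed.

Lemma clique_packing r k (A : {set T}) : 0 < k ->
  (forall S : {set T}, #|S| = r.+1 -> ~ is_stable e S) ->
  exists F (B : {set T}), [/\ B \subset A, is_clique_vertex_cover (A :\: B) F,
                 #|B| < k ^ r & #|F| * k <= #|A|].
Proof.
move=> k_gt0 no_stable; have [n] := ubnP #|A|; elim: n A => // n IHn A card_A.
case: (ltnP #|A| (k ^ r)) => [small | large].
  exists set0, A; rewrite cards0 setDv; split=> //.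
  by split=> [X|]; rewrite ?inE ?sub0set.
have [K [sKA K_clique card_K]] := ramsey_clique k_gt0 (fun S _ => no_stable S) large.
have card_AK : #|A :\: K| < n by rewrite cardsD (setIidPr sKA) card_K; lia.
have [F [B [sB [F_cliques cover_F] card_B card_F]]] := IHn _ card_AK.
exists (K |: F), B; split=> //.
- exact: subset_trans sB (subsetDl A K).
- split=> [X|]; first by case/setU1P=> [->|/F_cliques].
  apply/subsetP=> x; rewrite inE => /andP[xB xA].
  case: (boolP (x \in K)) => [xK | xK].
    by apply/bigcupP; exists K; rewrite ?setU11.
  have /bigcupP[X XF xX] : x \in cover F by apply: (subsetP cover_F); rewrite !inE xB xK.
  by apply/bigcupP; exists X; rewrite ?setU1r.
- have card_KF : #|K |: F| <= #|F|.+1 by rewrite cardsU1 -add1n leq_add2r leq_b1.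
  apply: leq_trans (leq_mul card_KF (leqnn k)) _.
  move: card_F; rewrite cardsD (setIidPr sKA) card_K mulSn.
  have : k <= #|A| by rewrite -card_K subset_leq_card.
  lia.
Qed.

Lemma clique_cover_of_vertex_cover (F : {set {set T}}) :
  is_clique_vertex_cover [set: T] F ->
  exists P, is_clique_cover e P /\ #|P| <= #|T| * #|F|.
Proof.
move=> [F_cliques F_cover].
pose star (vX : T * {set T}) := vX.1 |: [set u in vX.2 | e vX.1 u].
exists [set star vX | vX in setX [set: T] F]; split; last first.
  by rewrite -cardsT -cardsX leq_imset_card.
split.
- move=> Y /imsetP[[v X]]; rewrite in_setX /= => /andP[_ XF] ->.
  apply: is_clique_setU1 => [x y|u]; rewrite !inE /=.
    by move=> /andP[xX _] /andP[yX _]; apply: (F_cliques X XF).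
  by case/andP.
- move=> u v uv.
  have /bigcupP[X XF uX] : u \in cover F by apply: (subsetP F_cover).
  exists (star (v, X)); first by apply/imsetP; exists (v, X); rewrite // in_setX in_setT.
  by rewrite !inE eqxx uX e_sym uv orbT.
Qed.

Section ForbiddenStableSet.

Variable q : nat.
Hypothesis q_gt0 : 0 < q.
Hypothesis no_stable : forall S : {set T}, #|S| = q.+2 -> ~ is_stable e S.

Lemma clique_vertex_cover_pow2 i (A : {set T}) : #|A| <= (2 ^ i) ^ q.+1 ->
  exists F, is_clique_vertex_cover A F /\ #|F| <= 4 * (2 ^ i) ^ q.
Proof.
elim: i A => [|i IHi] A card_A.
  have /card_le1_eqP A_le1 : #|A| <= 1 by move: card_A; rewrite expn0 exp1n.
  exists [set A]; split; last by rewrite cards1 expn0 exp1n.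
  split=> [X /set1P-> u v uA vA|]; last by rewrite cover1.
  by rewrite (A_le1 u v uA vA) eqxx.
rewrite [2 ^ i.+1]expnS in card_A *; set k := 2 ^ i in card_A *.
have k_gt0 : 0 < k by rewrite expn_gt0.
have [F1 [B [sBA cover_F1 card_B card_F1]]] := clique_packing A k_gt0 no_stable.
have [F2 [cover_F2 card_F2]] := IHi B (ltnW card_B).
exists (F1 :|: F2); split.
  rewrite -[X in is_clique_vertex_cover X](setID A B) (setIidPr sBA) setUC.
  exact: is_clique_vertex_coverU.
have {}card_F1 : #|F1| <= 2 * 2 ^ q * k ^ q.
  rewrite -(leq_pmul2r k_gt0) -mulnA -expnSr -expnS -expnMn.
  exact: leq_trans card_F1 card_A.
have two_le : 2 <= 2 ^ q by rewrite -{1}(expn1 2) leq_exp2l.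
apply: leq_trans (leq_card_setU F1 F2) _.
rewrite expnMn.
move: (2 ^ q) (k ^ q) card_F1 card_F2 two_le => a b; nia.
Qed.

Lemma clique_vertex_cover_small (A : {set T}) : exists F,
  is_clique_vertex_cover A F /\ #|F| ^ q.+1 <= (2 ^ q.+2) ^ q.+1 * #|A| ^ q.
Proof.
have [/cards0_eq-> | A_gt0] := posnP #|A|.
  exists set0; rewrite cards0 exp0n //; split=> //.
  by split=> [X|]; rewrite ?inE ?sub0set.
have [i /andP[A_le A_ge]] := pow2_bracket (ltn0Sn q) A_gt0.
have [F [F_cover card_F]] := clique_vertex_cover_pow2 A_le.
exists F; split=> //.
apply: leq_trans (_ : (4 * (2 ^ i) ^ q) ^ q.+1 <= _); first by rewrite leq_exp2r.
rewrite expnMn expnAC.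
apply: leq_trans (_ : 4 ^ q.+1 * (2 ^ q.+1 * #|A|) ^ q <= _).
  by rewrite leq_mul2l leq_exp2r ?A_ge ?orbT.
rewrite expnMn mulnA leq_mul // (_ : 4 = 2 ^ 2) // -!expnM -expnD leq_exp2l //.
nia.
Qed.

Lemma clique_cover_small : exists P,
  is_clique_cover e P /\ #|P| ^ q.+1 <= (2 ^ q.+2) ^ q.+1 * #|T| ^ q.*2.+1.
Proof.
have [F [F_cover card_F]] := clique_vertex_cover_small [set: T].
have [P [P_cover card_P]] := clique_cover_of_vertex_cover F_cover.
exists P; split=> //.
apply: leq_trans (_ : (#|T| * #|F|) ^ q.+1 <= _); first by rewrite leq_exp2r.
rewrite cardsT in card_F; rewrite expnMn.
apply: leq_trans (leq_mul (leqnn _) card_F) _.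
by rewrite mulnCA -expnD addSn addnn.
Qed.

End ForbiddenStableSet.

End CliqueCovers.

Theorem mainTheorem2 (s : nat) (hs : (3 <= s)%N) :
  exists C : R, (0 < C)%R /\
    forall (T : finType) (e : rel T),
      simple_graph e ->
      (forall S : {set T}, #|S| = s -> ~ is_stable e S) ->
      exists P : {set {set T}},
        is_clique_cover e P /\
        (INR #|P| <= C * Rpower (INR #|T|) (2 - / INR (s - 1)))%R.
Proof.
have [q q_gt0 ->] : exists2 q, 0 < q & s = q.+2 by exists (s - 2); lia.
exists (INR (2 ^ q.+2)); split; first by apply/lt_0_INR/ltP; rewrite expn_gt0.
move=> T e e_simple no_stable.
have [P [P_cover card_P]] := clique_cover_small e_simple q_gt0 no_stable.
exists P; split=> //.
rewrite subSS subn0.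
exact: INR_le_Rpower_of_expn_le.
Qed.
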